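(* Let $T$ be an oriented tree. Suppose there exists an integer $d$ such that every finite digraph $G$ with minimum out-degree $\delta^+(G)\geq d$ contains $T$ as a subgraph. Then $T$ is grounded, i.e. its height function $h_T$ takes the same value on all vertices $v$ of $T$ with in-degree $\deg^-_T(v)\geq 2$.
   Context: Digraphs are finite, have no loops and no multiple copies of the same edge, but may contain two edges in opposite directions between a pair of vertices. An oriented tree is an orientation of an undirected tree. For an oriented tree $T$, a height function $h_T\colon V(T)\to\mathbb{Z}$ is a function with $h_T(v)=h_T(u)+1$ for every edge $(u,v)\in E(T)$; it exists and is unique up to an additive constant. $\delta^+(G)$ denotes the minimum out-degree of $G$. ''Contains $T$ as a subgraph'' means $G$ has a subgraph isomorphic to $T$ (as a digraph). *)

From mathcomp Require Import all_boot all_order all_algebra.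
Set Implicit Arguments. Unset Strict Implicit. Unset Printing Implicit Defensive.

(* A (finite) digraph is a finType of vertices V with an edge relation E : rel V.
   Being a relation, there are no multiple copies of the same edge; opposite
   edges (E x y and E y x) are allowed.  Loops are excluded by [irreflexive E]. *)

Definition outdeg (V : finType) (E : rel V) (v : V) : nat := #|[set w | E v w]|.
Definition indeg (V : finType) (E : rel V) (v : V) : nat := #|[set u | E u v]|.

Definition undirected (V : finType) (E : rel V) : rel V := fun x y => E x y || E y x.

Definition oriented_tree (V : finType) (E : rel V) : Prop :=
  [/\ irreflexive E,
      (forall x y, E x y -> ~~ E y x),
      0 < #|V|,
      (forall x y, connect (undirected E) x y) &
      (forall c : seq V, 3 <= size c -> uniq c -> ~~ cycle (undirected E) c)].

Definition height_fun (V : finType) (E : rel V) (h : V -> int) : Prop :=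
  forall u v, E u v -> h v = (h u + 1)%R.

Definition grounded (V : finType) (E : rel V) : Prop :=
  exists h : V -> int, height_fun E h /\
    (forall u v, 2 <= indeg E u -> 2 <= indeg E v -> h u = h v).

Definition contains_subgraph (VG : finType) (EG : rel VG)
    (VT : finType) (ET : rel VT) : Prop :=
  exists f : VT -> VG, injective f /\ (forall x y, ET x y -> EG (f x) (f y)).

From mathcomp Require Import all_boot all_order all_algebra zify.

Set Implicit Arguments.
Unset Strict Implicit.
Unset Printing Implicit Defensive.

(* Blow up the directed m-cycle: level i consists of the n-ary words of length
   i + 1, each word below the top level points to its n one-letter extensions,
   and each top-level word points to the n words of level 0.  All out-degrees
   are n and off level 0 every vertex has a single in-neighbour.  If T embeds
   and m > #|T|, the levels of the vertices of T advance cyclically along its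
   edges and miss some level r; cutting the cycle at r gives a height function,
   and all vertices of in-degree >= 2 sit on level 0. *)

Lemma leq_card_inj (T T' : finType) (A : {set T}) (B : {set T'}) (f : T -> T') :
  injective f -> (forall x, x \in A -> f x \in B) -> #|A| <= #|B|.
Proof.
move=> f_inj fAB; rewrite -(card_imset A f_inj); apply: subset_leq_card.
by apply/subsetP => _ /imsetP[x Ax ->]; exact: fAB.
Qed.

Lemma ordS_val m (i : 'I_m) : ordS i = (if i.+1 < m then i.+1 else 0) :> nat.
Proof.
rewrite /=; case: ltnP => [/modn_small // | m_le_i1].
by rewrite (_ : i.+1 = m) ?modnn //; apply/eqP; rewrite eqn_leq m_le_i1 ltn_ord.
Qed.

Lemma indeg_embed (VT VG : finType) (ET : rel VT) (EG : rel VG) (f : VT -> VG) :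
  injective f -> (forall x y, ET x y -> EG (f x) (f y)) ->
  forall u, indeg ET u <= indeg EG (f u).
Proof.
move=> f_inj f_hom u; apply: leq_card_inj f_inj _ => w.
by rewrite !inE; exact: f_hom.
Qed.

Lemma exists_level_missed (V : finType) m (lev : V -> 'I_m) :
  #|V| < m -> exists r : 'I_m, forall x, lev x != r.
Proof.
move=> V_lt_m; have : 0 < #|~: (lev @: V)|.
  rewrite -(ltn_add2l #|lev @: V|) addn0 cardsC card_ord.
  exact: leq_ltn_trans (leq_imset_card lev V) V_lt_m.
case/card_gt0P=> r; rewrite inE => r_missed; exists r => x.
by apply: contraNneq r_missed => <-; exact: imset_f.
Qed.

Definition cycle_dist m (r i : nat) : nat := if r <= i then i - r else i + m - r.

Lemma height_fun_cyclic_levels (V : finType) (E : rel V) m (lev : V -> 'I_m) (r : 'I_m) :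
  (forall x y, E x y -> lev y = ordS (lev x)) -> (forall x, lev x != r) ->
  height_fun E (fun x => Posz (cycle_dist m r (lev x))).
Proof.
move=> step missed x y /step lev_y; rewrite -PoszD /cycle_dist; congr Posz.
have : lev y != r :> nat by exact: missed y.
rewrite lev_y ordS_val; have := ltn_ord (lev x); have := ltn_ord r.
move: (lev x : nat) (r : nat) => i k k_lt_m i_lt_m.
by case: ifP; case: (leqP k i); case: (leqP k i.+1); case: (leqP k 0); lia.
Qed.

Lemma grounded_cyclic_levels (V : finType) (E : rel V) m (lev : V -> 'I_m) :
  #|V| < m -> (forall x y, E x y -> lev y = ordS (lev x)) ->
  (forall u v, 2 <= indeg E u -> 2 <= indeg E v -> lev u = lev v) ->
  grounded E.
Proof.
move=> V_lt_m step same_level; have [r missed] := exists_level_missed lev V_lt_m.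
by exists (fun x => Posz (cycle_dist m r (lev x))); split;
  [exact: height_fun_cyclic_levels | move=> u v /same_level/[apply] ->].
Qed.

Section CyclicTree.

Variables m n : nat.

(* A word of length i + 1 over 'I_n is encoded by its value in base n, so that
   deleting its last letter is [%/ n]. *)
Definition cyc_tree : finType := {i : 'I_m & 'I_(n ^ i.+1)}.

Definition cyc_tree_rel : rel cyc_tree := fun p q =>
  (tag q == ordS (tag p)) && ((tag q == 0 :> nat) || (tagged q %/ n == tagged p)).

Lemma cyc_tree_eq (p q : cyc_tree) : tag p = tag q -> tagged p = tagged q :> nat -> p = q.
Proof. by case: p q => [i x] [j y] /= eq_ij; subst j => /val_inj ->. Qed.

Lemma cyc_tree_indeg q : 2 <= indeg cyc_tree_rel q -> tag q = 0 :> nat.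
Proof.
case/card_gt1P=> p [p' []]; rewrite !inE => /andP[/eqP q_p q_par] /andP[/eqP q_p' q_par'].
apply: contraNeq => q_ne0; apply/eqP/cyc_tree_eq.
  by apply: ordS_inj; rewrite -q_p q_p'.
by move: q_par q_par'; rewrite (negPf q_ne0) /= => /eqP <- /eqP <-.
Qed.

Hypothesis m_gt1 : 1 < m.

Lemma cyc_tree_irreflexive : irreflexive cyc_tree_rel.
Proof.
move=> [i x]; apply/negP => /andP[/eqP/(congr1 val)] /=.
by rewrite -[_ %% m]/(ordS i : nat) ordS_val; case: ifP; lia.
Qed.

Hypothesis n_gt0 : 0 < n.

Let pow_gt0 e : 0 < n ^ e. Proof. by rewrite expn_gt0 n_gt0. Qed.

Lemma cyc_tree_nonempty : 0 < #|cyc_tree|.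
Proof.
apply/card_gt0P; pose i0 : 'I_m := Ordinal (ltnW m_gt1).
by exists (Tagged (fun i : 'I_m => 'I_(n ^ i.+1)) (Ordinal (pow_gt0 i0.+1))).
Qed.

Lemma cyc_tree_outdeg p : n <= outdeg cyc_tree_rel p.
Proof.
set x := tagged p; set j := ordS (tag p).
pose child (a : 'I_n) : cyc_tree :=
  Tagged (fun i : 'I_m => 'I_(n ^ i.+1)) (Ordinal (ltn_pmod (x * n + a) (pow_gt0 j.+1))).
have child_inj : injective child.
  move=> a b /(congr1 (fun v : cyc_tree => (tagged v : nat) %% n)) /=.
  have n_dvd : n %| n ^ j.+1 by rewrite expnS dvdn_mulr.
  rewrite !modn_dvdm // !modnMDl !modn_small //; exact: val_inj.
have child_edge a : cyc_tree_rel p (child a).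
  rewrite /cyc_tree_rel /= eqxx -[(_.+1 %% m)]/(ordS (tag p) : nat) ordS_val.
  case: ifP => // i1_lt_m.
  have x_lt : x < n ^ (tag p).+1 := valP x.
  have child_lt : x * n + a < n ^ (tag p).+2.
    rewrite [n ^ _.+2]expnSr; apply: leq_trans (_ : x.+1 * n <= _).
      by rewrite mulSnr ltn_add2l.
    by rewrite leq_mul2r x_lt orbT.
  by rewrite modn_small //= divnMDl // divn_small ?addn0.
rewrite /outdeg -{1}[n]card_ord -cardsT; apply: leq_card_inj child_inj _ => a _.
by rewrite inE child_edge.
Qed.

End CyclicTree.

Theorem theorem1p3 (VT : finType) (ET : rel VT) :
  oriented_tree ET ->
  (exists d : nat,
     forall (VG : finType) (EG : rel VG),
       0 < #|VG| -> irreflexive EG ->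
       (forall v : VG, d <= outdeg EG v) ->
       contains_subgraph EG ET) ->
  grounded ET.
Proof.
move=> _ [d embed]; pose m := #|VT|.+2; pose n := d.+1.
have m_gt1 : 1 < m by []; have n_gt0 : 0 < n by [].
have [||| f [f_inj f_hom]] := embed (cyc_tree m n) (@cyc_tree_rel m n).
- exact: cyc_tree_nonempty.
- exact: cyc_tree_irreflexive.
- by move=> v; apply: leq_trans (cyc_tree_outdeg n_gt0 v).
have root_level u : 2 <= indeg ET u -> tag (f u) = 0 :> nat.
  by move/leq_trans/(_ (indeg_embed f_inj f_hom u))/cyc_tree_indeg.
apply: (@grounded_cyclic_levels _ _ m (fun x => tag (f x))) => [|x y|u v].
- exact: leqnSn.
- by move/f_hom/andP=> [/eqP].
- by move=> /root_level u0 /root_level v0; apply: val_inj; rewrite /= u0 v0.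
Qed.
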